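(* Let $N\ge 2$ and $0<\gamma_1\le\dots\le\gamma_N$. There exists a sum-rate optimal spanning tree $T$ on $\{1,\dots,N\}$ such that for every $0<i<N-1$, the vertex $N-i$ has at most one neighbor $u$ with $\gamma_u<\gamma_{N-i}$ (hence at least $\deg(N-i)-1$ neighbors with SNR at least $\gamma_{N-i}$), and $\deg(N-i)\le i+1$.
   Context: For distinct $i,j$ put $\varphi(i,j)=\log_2\!\big(\gamma_i+\frac{\gamma_i}{\gamma_i+\gamma_j}\big)$. For a spanning tree $T$ on $\{1,\dots,N\}$ with neighbor sets $A_i^T$, define $R_{\mathrm s}(T)=\frac{1}{2(N-1)}\sum_{i=1}^N \min_{j\in A_i^T}\varphi(i,j)$. A spanning tree is called sum-rate optimal if it maximizes $R_{\mathrm s}$ over all spanning trees on $\{1,\dots,N\}$. The value $\gamma_k$ is called the SNR of vertex $k$. *)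

From mathcomp Require Import all_boot.
From Stdlib Require Import Reals.

Set Implicit Arguments.
Unset Strict Implicit.
Unset Printing Implicit Defensive.

(* Vertex k of the paper ({1,...,N}) is the ordinal k-1 : 'I_N. *)

Definition simple_graph (N : nat) (e : rel 'I_N) : Prop :=
  (forall x y, e x y = e y x) /\ (forall x, e x x = false).

Definition connected_graph (N : nat) (e : rel 'I_N) : Prop :=
  forall x y, connect e x y.

Definition acyclic_graph (N : nat) (e : rel 'I_N) : Prop :=
  forall c : seq 'I_N, uniq c -> (3 <= size c)%N -> ~~ cycle e c.

Definition spanning_tree (N : nat) (e : rel 'I_N) : Prop :=
  simple_graph e /\ connected_graph e /\ acyclic_graph e.

Definition log2 (x : R) : R := (ln x / ln 2)%R.

Definition phi (N : nat) (g : 'I_N -> R) (i j : 'I_N) : R :=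
  log2 (g i + g i / (g i + g j))%R.

(* minimum of phi(i,j) over the neighbours j of i (0 if no neighbour,
   which never happens in a spanning tree with N >= 2) *)
Definition min_phi (N : nat) (g : 'I_N -> R) (e : rel 'I_N) (i : 'I_N) : R :=
  match [seq phi g i j | j <- enum 'I_N & e i j] with
  | [::] => 0%R
  | x :: s => foldl Rmin x s
  end.

Definition sum_rate (N : nat) (g : 'I_N -> R) (e : rel 'I_N) : R :=
  (/ (2 * (INR N - 1)) *
   foldr Rplus 0 [seq min_phi g e i | i <- enum 'I_N])%R.

Definition sum_rate_optimal (N : nat) (g : 'I_N -> R) (e : rel 'I_N) : Prop :=
  spanning_tree e /\
  forall e' : rel 'I_N, spanning_tree e' -> (sum_rate g e' <= sum_rate g e)%R.

Definition degree (N : nat) (e : rel 'I_N) (v : 'I_N) : nat :=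
  #|[pred j | e v j]|.

From mathcomp Require Import all_boot.
From Stdlib Require Import Reals Lra.
From mathcomp Require Import zify.

Set Implicit Arguments.
Unset Strict Implicit.
Unset Printing Implicit Defensive.

(* Call a spanning tree increasing if every vertex v > 0 has exactly one
   neighbour below it, its parent p v < v; since the SNRs are sorted, "below"
   also means "of no larger SNR". Any spanning tree e can be traded for an
   increasing one without lowering the sum rate: take as parent of v a vertex
   u < v adjacent to the component of v in the subgraph of e induced on the
   vertices >= v. Then every tree neighbour of v is dominated, in index and
   hence in SNR, by some e-neighbour of v, and phi(v, .) is antitone in the
   SNR, so no term min_phi(v) decreases. Hence a best increasing tree, which
   exists as there are finitely many, is sum-rate optimal. In it a vertex v has
   at most one neighbour of smaller SNR, its parent, and all other neighbours
   lie above it, so deg v <= N - v. *)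

(* The root 0 has no parent: the value [p 0] is ignored. *)
Definition parent_rel N (p : {ffun 'I_N -> 'I_N}) : rel 'I_N :=
  fun a b => ((0 < a) && (p a == b)) || ((0 < b) && (p b == a)).

Definition descending N (p : {ffun 'I_N -> 'I_N}) : bool :=
  [forall v : 'I_N, (0 < v) ==> (p v < v)].

Lemma card_ord_gt N (v : 'I_N) : #|[pred j : 'I_N | v < j]| = N - v.+1.
Proof.
rewrite -sum1_card big_mkcond /= -(big_mkord xpredT (fun j => (v < j : nat))).
rewrite (big_cat_nat (n:=v.+1)) //= big_nat big1 ?add0n; last first.
  by move=> j /andP[_ jv]; rewrite ltnNge -ltnS jv.
rewrite big_nat_cond (eq_bigr (fun=> 1)) => [|j /andP[/andP[]]]; last by move=> ->.
by rewrite -big_nat_cond sum_nat_const_nat muln1.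
Qed.

Section ParentTree.

Variables (n : nat) (p : {ffun 'I_n.+1 -> 'I_n.+1}).
Hypothesis p_desc : descending p.

Lemma parent_lt (v : 'I_n.+1) : 0 < v -> p v < v.
Proof. by move=> v_gt0; move/forallP/(_ v): p_desc; rewrite v_gt0. Qed.

Lemma parent_rel_sym : symmetric (parent_rel p).
Proof. by move=> a b; rewrite /parent_rel orbC. Qed.

Lemma parent_rel_irr (v : 'I_n.+1) : parent_rel p v v = false.
Proof.
rewrite /parent_rel orbb; apply/negbTE/negP => /andP[v_gt0 /eqP pv].
by have := parent_lt v_gt0; rewrite pv ltnn.
Qed.

Lemma parent_rel_lt (v u : 'I_n.+1) : parent_rel p v u -> u < v -> u = p v.
Proof.
move=> /orP[/andP[_ /eqP ->] // | /andP[u_gt0 /eqP pu]] uv.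
by have := parent_lt u_gt0; rewrite pu ltnNge ltnW.
Qed.

Lemma connect_parent_rel_ord0 (v : 'I_n.+1) : connect (parent_rel p) v ord0.
Proof.
have [k] := ubnP v; elim: k v => [|k IH] v //; rewrite ltnS => vk.
have [v0 | v_gt0] := posnP v; first by have -> : v = ord0 by apply: val_inj.
apply: connect_trans (connect1 _) (IH _ (leq_trans (parent_lt v_gt0) vk)).
by rewrite /parent_rel v_gt0 eqxx.
Qed.

(* The largest vertex of a cycle has two distinct cycle neighbours below it,
   and both would have to be its parent. *)
Lemma parent_rel_acyclic : acyclic_graph (parent_rel p).
Proof.
move=> c c_uniq c_size; apply/negP => c_cycle.
have [x0 x0_c] : {x0 | x0 \in c}.
  by case: c c_size {c_uniq c_cycle} => // x c' _; exists x; rewrite mem_head.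
case: (arg_maxnP val x0_c) => m m_c m_max.
have lt_m x : x \in c -> x != m -> x < m.
  by move=> x_c xm; rewrite ltn_neqAle val_eqE xm; exact: m_max.
case: (rot_to m_c) => i s c_rot.
have in_c x : x \in s -> x \in c by move=> xs; rewrite -(mem_rot i) c_rot inE xs orbT.
move: c_cycle c_uniq c_size; rewrite -(rot_cycle i) -(rot_uniq i) -(size_rot i) c_rot.
case/lastP: s in_c {c_rot} => [|s b] in_c; first by [].
case: s in_c => [|a s] in_c; first by rewrite /= => _ _.
rewrite /= rcons_path last_rcons => /andP[ma /andP[_ bm]].
case/and3P=> m_notin a_notin _ _.
have neq_m x : x \in rcons (a :: s) b -> x != m.
  by apply: contraTneq => ->.
have a_in : a \in rcons (a :: s) b by rewrite mem_head.
have b_in : b \in rcons (a :: s) b by rewrite mem_rcons mem_head.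
have a_pm := parent_rel_lt ma (lt_m _ (in_c _ a_in) (neq_m _ a_in)).
have b_pm : b = p m.
  rewrite parent_rel_sym in bm.
  exact: parent_rel_lt bm (lt_m _ (in_c _ b_in) (neq_m _ b_in)).
by move: a_notin; rewrite a_pm -b_pm mem_rcons mem_head.
Qed.

Lemma parent_rel_spanning_tree : spanning_tree (parent_rel p).
Proof.
split; [by split; [exact: parent_rel_sym | exact: parent_rel_irr] | split].
- move=> x y; apply: connect_trans (connect_parent_rel_ord0 x) _.
  by rewrite (sym_connect_sym parent_rel_sym) connect_parent_rel_ord0.
- exact: parent_rel_acyclic.
Qed.

Lemma parent_rel_nonisolated (v : 'I_n.+1) : 0 < n -> exists u, parent_rel p v u.
Proof.
move=> n_gt0; have [v0 | v_gt0] := posnP v; last first.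
  by exists (p v); rewrite /parent_rel v_gt0 eqxx.
pose o1 : 'I_n.+1 := Ordinal (n_gt0 : 1 < n.+1).
exists o1; apply/orP; right; apply/andP; split => //.
have : p o1 < 1 := parent_lt (isT : 0 < o1).
by rewrite ltnS leqn0 => /eqP p_o1; apply/eqP/val_inj; rewrite /= p_o1 v0.
Qed.

Lemma degree_parent_rel (v : 'I_n.+1) : degree (parent_rel p) v <= n.+1 - v.
Proof.
have nbs : [pred j | parent_rel p v j]
    \subset [predU pred1 (p v) & [pred j : 'I_n.+1 | v < j]].
  apply/subsetP => j; rewrite !inE /= => vj.
  case: (ltngtP v j) => [_ | jv | /val_inj vj_eq]; first by rewrite orbT.
    by rewrite (parent_rel_lt vj jv) eqxx.
  by rewrite vj_eq parent_rel_irr in vj.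
apply: leq_trans (subset_leq_card nbs) _.
rewrite -(leq_add2r #|[predI pred1 (p v) & [pred j : 'I_n.+1 | v < j]]|).
rewrite cardUI card1 card_ord_gt.
have := ltn_ord v; lia.
Qed.

End ParentTree.

Definition upper_rel N (e : rel 'I_N) (v : 'I_N) : rel 'I_N :=
  [rel a b | [&& e a b, v <= a & v <= b]].

Definition tree_parent N (e : rel 'I_N) : {ffun 'I_N -> 'I_N} :=
  [ffun v : 'I_N => odflt v
     [pick u : 'I_N | (u < v) && [exists y, connect (upper_rel e v) v y && e y u]]].

Section TreeParent.

Variables (n : nat) (e : rel 'I_n.+1).
Hypotheses (e_sym : symmetric e) (e_conn : connected_graph e).

Lemma connect_upper_ge (v y : 'I_n.+1) : connect (upper_rel e v) v y -> v <= y.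
Proof.
have closed_ge : closed (upper_rel e v) [pred w : 'I_n.+1 | v <= w].
  by move=> a b /and3P[_ va vb]; rewrite !inE va vb.
by move/(closed_connect closed_ge); rewrite !inE leqnn.
Qed.

Lemma upper_exit (v x : 'I_n.+1) q :
  connect (upper_rel e v) v x -> path e x q -> last x q < v ->
  exists u : 'I_n.+1, (u < v) && [exists y, connect (upper_rel e v) v y && e y u].
Proof.
elim: q x => [|z q IH] x vx /=.
  by move=> _; rewrite ltnNge (connect_upper_ge vx).
case/andP=> xz zq zq_v; have v_le_x := connect_upper_ge vx.
have [zv | vz] := ltnP z v.
  by exists z; rewrite zv; apply/existsP; exists x; rewrite vx.
apply: IH zq zq_v; apply: connect_trans vx (connect1 _).
by rewrite /upper_rel /= xz vz v_le_x.
Qed.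

Lemma tree_parentP (v : 'I_n.+1) : 0 < v ->
  (tree_parent e v < v)
  && [exists y, connect (upper_rel e v) v y && e y (tree_parent e v)].
Proof.
move=> v_gt0; rewrite ffunE; case: pickP => [u -> // | no_exit].
have /connectP[q vq v0] := e_conn v ord0.
have q_exits : last v q < v by rewrite -v0.
have [u /andP[uv u_exit]] := upper_exit (connect0 _ v) vq q_exits.
by have := no_exit u; rewrite uv u_exit.
Qed.

Lemma tree_parent_descending : descending (tree_parent e).
Proof. by apply/forallP => v; apply/implyP => /tree_parentP /andP[]. Qed.

Lemma tree_parent_dominated (x j : 'I_n.+1) :
  parent_rel (tree_parent e) x j -> exists2 y, e x y & j <= y.
Proof.
case/orP=> /andP[pos /eqP par];
  have /andP[lt /existsP[y /andP[conn ey]]] := tree_parentP pos; rewrite par in lt ey.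
- case/connectP: conn => -[|z q] /=; first by move=> _ y_x; exists j; rewrite // -y_x.
  case/andP=> /and3P[xz _ xz_le] _ _.
  by exists z => //; apply: leq_trans (ltnW lt) xz_le.
- by exists y; [rewrite e_sym | exact: connect_upper_ge conn].
Qed.

End TreeParent.

Section FoldRmin.

Variables (T : eqType) (f : T -> R).

Lemma foldl_Rmin_le_init s x : (foldl Rmin x [seq f a | a <- s] <= x)%R.
Proof.
elim: s x => [|b s IH] x /=; first exact: Rle_refl.
exact: Rle_trans (IH _) (Rmin_l _ _).
Qed.

Lemma foldl_Rmin_le s x a : a \in s -> (foldl Rmin x [seq f a | a <- s] <= f a)%R.
Proof.
elim: s x => [|b s IH] x //=; rewrite inE => /predU1P[-> | a_s]; last exact: IH.
exact: Rle_trans (foldl_Rmin_le_init _ _) (Rmin_r _ _).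
Qed.

Lemma foldl_Rmin_glb s x r : (r <= x)%R -> (forall a, a \in s -> r <= f a)%R ->
  (r <= foldl Rmin x [seq f a | a <- s])%R.
Proof.
elim: s x => [|b s IH] x //= r_x r_s.
apply: IH => [|a a_s]; last by apply: r_s; rewrite inE a_s orbT.
by apply: Rmin_glb => //; apply: r_s; rewrite mem_head.
Qed.

End FoldRmin.

Section MinPhi.

Variables (N : nat) (g : 'I_N -> R).

Lemma min_phi_le (e : rel 'I_N) (x j : 'I_N) : e x j -> (min_phi g e x <= phi g x j)%R.
Proof.
move=> e_xj; have : j \in [seq k <- enum 'I_N | e x k] by rewrite mem_filter e_xj mem_enum.
rewrite /min_phi; case: [seq k <- enum 'I_N | e x k] => [// | a s].
rewrite inE => /predU1P[-> | j_s]; [exact: foldl_Rmin_le_init | exact: foldl_Rmin_le].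
Qed.

Lemma min_phi_glb (e : rel 'I_N) (x : 'I_N) r : (exists j, e x j) ->
  (forall j, e x j -> r <= phi g x j)%R -> (r <= min_phi g e x)%R.
Proof.
move=> [j0 e_xj0] r_le; rewrite /min_phi.
have : forall k, k \in [seq k <- enum 'I_N | e x k] -> (r <= phi g x k)%R.
  by move=> k; rewrite mem_filter => /andP[e_xk _]; exact: r_le.
have : j0 \in [seq k <- enum 'I_N | e x k] by rewrite mem_filter e_xj0 mem_enum.
case: [seq k <- enum 'I_N | e x k] => [// | a s] _ r_s.
by apply: foldl_Rmin_glb => [|k k_s]; apply: r_s; rewrite inE ?eqxx ?k_s ?orbT.
Qed.

Lemma min_phi_dominated (e1 e2 : rel 'I_N) (x : 'I_N) : (exists j, e2 x j) ->
  (forall j, e2 x j -> exists2 y, e1 x y & (phi g x y <= phi g x j)%R) ->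
  (min_phi g e1 x <= min_phi g e2 x)%R.
Proof.
move=> e2_x dom; apply: min_phi_glb => // j /dom[y e1_xy le_phi].
exact: Rle_trans (min_phi_le e1_xy) le_phi.
Qed.

Lemma sum_rate_le (e1 e2 : rel 'I_N) : (1 < N)%N ->
  (forall x, min_phi g e1 x <= min_phi g e2 x)%R -> (sum_rate g e1 <= sum_rate g e2)%R.
Proof.
move=> N_gt1 le_min; rewrite /sum_rate; apply: Rmult_le_compat_l.
  have : (INR 2 <= INR N)%R by apply/le_INR/leP.
  by rewrite /= => ?; left; apply: Rinv_0_lt_compat; lra.
elim: (enum 'I_N) => [|a s IH] /=; [exact: Rle_refl | exact: Rplus_le_compat].
Qed.

End MinPhi.

Lemma ln2_gt0 : (0 < ln 2)%R.
Proof. by rewrite -ln_1; apply: ln_increasing; lra. Qed.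

Lemma log2_le x y : (0 < x)%R -> (x <= y)%R -> (log2 x <= log2 y)%R.
Proof.
move=> x_gt0 [x_lt_y | <-]; last exact: Rle_refl.
apply: Rmult_le_compat_r; first by left; apply/Rinv_0_lt_compat/ln2_gt0.
by left; apply: ln_increasing.
Qed.

Lemma phi_antitone N (g : 'I_N -> R) (x y j : 'I_N) : (0 < g x)%R -> (0 < g j)%R ->
  (g j <= g y)%R -> (phi g x y <= phi g x j)%R.
Proof.
move=> gx gj gjy; apply: log2_le.
  apply: Rplus_lt_le_0_compat => //; apply: Rmult_le_pos; first lra.
  by left; apply: Rinv_0_lt_compat; lra.
apply/Rplus_le_compat_l/Rmult_le_compat_l; first lra.
by apply: Rinv_le_contravar; lra.
Qed.

Lemma exists_Rargmax (T : finType) (P : pred T) (F : T -> R) x0 : P x0 ->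
  exists2 x, P x & forall y, P y -> (F y <= F x)%R.
Proof.
move=> P_x0; suff [x x_P x_max] : exists2 x, x \in enum P &
    forall y, y \in enum P -> (F y <= F x)%R.
  by exists x => [|y P_y]; [rewrite mem_enum in x_P | apply: x_max; rewrite mem_enum].
have x0_P : x0 \in enum P by rewrite mem_enum.
have : enum P != [::] by apply: contraTneq x0_P => ->.
elim: (enum P) => // a [|b s] IH _.
  by exists a => [|y]; rewrite ?mem_head // inE => /eqP ->; exact: Rle_refl.
have [c c_s c_max] := IH isT.
have [ac | ca] := Rle_lt_dec (F a) (F c).
  exists c => [|y]; first by rewrite inE c_s orbT.
  by rewrite inE => /predU1P[-> // | /c_max].
exists a => [|y]; first exact: mem_head.
by rewrite inE => /predU1P[-> | /c_max]; [exact: Rle_refl | lra].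
Qed.

Lemma sum_rate_le_tree_parent n (g : 'I_n.+2 -> R) (e : rel 'I_n.+2) :
  (forall k, 0 < g k)%R -> (forall k l : 'I_n.+2, k <= l -> (g k <= g l)%R) ->
  symmetric e -> connected_graph e ->
  (sum_rate g e <= sum_rate g (parent_rel (tree_parent e)))%R.
Proof.
move=> g_pos g_mono e_sym e_conn; apply: sum_rate_le => // x.
apply: min_phi_dominated.
  exact: parent_rel_nonisolated (tree_parent_descending e_conn) _ _.
move=> j /(tree_parent_dominated e_sym e_conn)[y e_xy j_le_y].
by exists y => //; apply: phi_antitone => //; exact: g_mono.
Qed.

Theorem lemma3 (N : nat) (g : 'I_N -> R) :
  (2 <= N)%N ->
  (forall k : 'I_N, (0 < g k)%R) ->
  (forall k l : 'I_N, (k <= l)%N -> (g k <= g l)%R) ->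
  exists e : rel 'I_N,
    sum_rate_optimal g e /\
    forall (i : nat) (v : 'I_N),
      (0 < i)%N -> (i < N - 1)%N -> nat_of_ord v = (N - 1 - i)%N ->
      (forall u w : 'I_N, e v u -> e v w ->
          (g u < g v)%R -> (g w < g v)%R -> u = w) /\
      (degree e v <= i + 1)%N.
Proof.
case: N g => [|[|n]] g // _ g_pos g_mono.
have root_desc : descending [ffun _ : 'I_n.+2 => ord0].
  by apply/forallP => v; rewrite ffunE; apply/implyP.
have [p p_desc p_max] := exists_Rargmax (fun q => sum_rate g (parent_rel q)) root_desc.
exists (parent_rel p); split.
  split=> [|e [[e_sym _] [e_conn _]]]; first exact: parent_rel_spanning_tree.
  apply: Rle_trans (sum_rate_le_tree_parent g_pos g_mono e_sym e_conn) _.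
  exact: p_max (tree_parent_descending e_conn).
move=> i v _ _ v_eq; split.
  have below u : (g u < g v)%R -> u < v.
    by move=> g_uv; rewrite ltnNge; apply/negP => /g_mono; lra.
  move=> u w v_u v_w /below u_v /below w_v.
  by rewrite (parent_rel_lt p_desc v_u u_v) (parent_rel_lt p_desc v_w w_v).
by apply: leq_trans (degree_parent_rel p_desc v) _; rewrite v_eq; lia.
Qed.
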